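(* Let $\kappa=(a,b,0,0)\in[-2,2]^4$. Then each level set $X_\kappa(x)\subset E_\kappa$ is an ellipse (possibly degenerate) centered at $(x,0,0)$. Consequently $Y_\kappa(0)$ and $Z_\kappa(0)$ intersect every ellipse $X_\kappa(x)$.
   Context: Let $M$ be a four-holed sphere with $\pi_1(M)=\langle A,B,C,D:ABCD=I\rangle$, $A,B,C,D$ the boundary classes, and set $X=AB$, $Y=BC$, $Z=CA$. For $\kappa=(a,b,c,d)\in[-2,2]^4$, $E_\kappa\subset\mathbb R^3$ is the set of triples $(\operatorname{tr}\rho(X),\operatorname{tr}\rho(Y),\operatorname{tr}\rho(Z))$ for $[\rho]\in\operatorname{Hom}(\pi_1(M),\mathrm{SU}(2))/\mathrm{SU}(2)$ with boundary traces $(\operatorname{tr}\rho(A),\operatorname{tr}\rho(B),\operatorname{tr}\rho(C),\operatorname{tr}\rho(D))=\kappa$; it lies in the surface $x^2+y^2+z^2+xyz=(ab+cd)x+(ad+bc)y+(ac+bd)z-(a^2+b^2+c^2+d^2+abcd-4)$. The level sets are $X_\kappa(x)=\{(x',y',z')\in E_\kappa:x'=x\}$, $Y_\kappa(y)=\{(x',y',z')\in E_\kappa:y'=y\}$, $Z_\kappa(z)=\{(x',y',z')\in E_\kappa:z'=z\}$. *)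

From HB Require Import structures.
From mathcomp Require Import all_boot all_order all_algebra.
From mathcomp Require Import complex.
From mathcomp Require Import reals.
Set Implicit Arguments. Unset Strict Implicit. Unset Printing Implicit Defensive.
Import Order.TTheory GRing.Theory Num.Theory.
Local Open Scope ring_scope.
Local Open Scope complex_scope.

Section Defs.
Variable R : realType.

Definition adjmx (M : 'M[R[i]]_2) : 'M[R[i]]_2 := map_mx (@conjc R) M^T.

Definition SU2 (M : 'M[R[i]]_2) : Prop := M *m adjmx M = 1%:M /\ \det M = 1.

(* A representation rho : pi_1(M) -> SU(2) of the four-holed sphere group
   <A,B,C,D | ABCD = I> is exactly a quadruple of SU(2) matrices
   (rho A, rho B, rho C, rho D) whose product is the identity. *)
Definition SU2_rep (A B C D : 'M[R[i]]_2) : Prop :=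
  [/\ SU2 A, SU2 B, SU2 C, SU2 D & A *m B *m C *m D = 1%:M].

(* E_kappa: triples (tr rho(AB), tr rho(BC), tr rho(CA)) for representations with
   boundary traces kappa = (a,b,c,d).  (Traces of SU(2) matrices are real; we ask
   that the complex trace equal the real number embedded in R[i].) *)
Definition Ekappa (a b c d : R) (p : R * R * R) : Prop :=
  exists A B C D : 'M[R[i]]_2,
    [/\ SU2_rep A B C D,
        [/\ \tr A = a%:C, \tr B = b%:C, \tr C = c%:C & \tr D = d%:C] &
        [/\ \tr (A *m B) = p.1.1%:C, \tr (B *m C) = p.1.2%:C
          & \tr (C *m A) = p.2%:C]].

Definition Xlevel (a b c d x : R) (p : R * R * R) : Prop := Ekappa a b c d p /\ p.1.1 = x.
Definition Ylevel (a b c d y : R) (p : R * R * R) : Prop := Ekappa a b c d p /\ p.1.2 = y.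
Definition Zlevel (a b c d z : R) (p : R * R * R) : Prop := Ekappa a b c d p /\ p.2 = z.

(* A (possibly degenerate) ellipse in R^3 centered at c: the image of the unit
   circle under an affine map u |-> c + u1 e1 + u2 e2 (e1, e2 arbitrary, possibly
   dependent or zero, giving a segment or a point in the degenerate cases). *)
Definition ellipse_centered (S : R * R * R -> Prop) (c : R * R * R) : Prop :=
  exists e1 e2 : R * R * R, forall p : R * R * R,
    S p <-> exists u v : R, u ^+ 2 + v ^+ 2 = 1 /\
      p = (c.1.1 + u * e1.1.1 + v * e2.1.1,
           c.1.2 + u * e1.1.2 + v * e2.1.2,
           c.2 + u * e1.2 + v * e2.2).

End Defs.

From HB Require Import structures.
From mathcomp Require Import all_boot all_order all_algebra.
From mathcomp Require Import complex.
From mathcomp Require Import reals.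
From mathcomp Require Import ring lra.
Import Order.TTheory GRing.Theory Num.Theory.
Set Implicit Arguments. Unset Strict Implicit. Unset Printing Implicit Defensive.
Local Open Scope ring_scope.

(* Realize SU(2) as the unit quaternions, with trace 2 q0.  If rho A, rho B, rho C are
   a0 + alpha, b0 + beta, gamma (so a = 2 a0, b = 2 b0), the conditions c = d = 0 say
   q0 C = 0 and q0 (ABC) = 0, i.e. det(alpha, beta, gamma) = -(a0 beta.gamma + b0 alpha.gamma).
   Squaring and expanding det^2 as a Gram determinant gives the cubic equation of
   E_kappa, and Cauchy-Schwarz gives y^2 <= 4 - b^2 and z^2 <= 4 - a^2; conversely
   every point of the cubic within these bounds is realized with rho C = k.  On the
   plane x = const the cubic reads
     (2 + x) ((y + z) / 2)^2 + (2 - x) ((y - z) / 2)^2 = K(x),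
   an ellipse centred at (x, 0, 0) when |x| < 2 (the bounds then hold automatically),
   and the segment z = -(x/2) y, y^2 <= 4 - b^2 when |x| = 2.  Its points with y = 0
   or z = 0 are (x, 0, sqrt K) and (x, sqrt K, 0). *)

Lemma mx2_ext (T : Type) (A B : 'M[T]_2) :
  A 0 0 = B 0 0 -> A 0 1 = B 0 1 -> A 1 0 = B 1 0 -> A 1 1 = B 1 1 -> A = B.
Proof.
have ord2 (k : 'I_2) : k = 0 \/ k = 1.
  by case: k => -[|[|k]] Hk; [left | right |]; try apply/val_inj.
by move=> *; apply/matrixP => i j; case: (ord2 i) (ord2 j) => -> [] ->.
Qed.

Lemma det_mx2 (T : comPzRingType) (M : 'M[T]_2) : \det M = M 0 0 * M 1 1 - M 0 1 * M 1 0.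
Proof.
rewrite (expand_det_row _ 0) !big_ord_recl big_ord0 /cofactor !det_mx11 !mxE /=.
rewrite /bump /= expr0 expr1 addr0 mul1r mulN1r mulrN.
by congr (M _ _ * M _ _ - M _ _ * M _ _); apply/val_inj.
Qed.

Lemma adj_mx2 (T : comPzRingType) (M : 'M[T]_2) :
  [/\ \adj M 0 0 = M 1 1, \adj M 0 1 = - M 0 1, \adj M 1 0 = - M 1 0 & \adj M 1 1 = M 0 0].
Proof.
have l0 : lift 0 0 = 1 :> 'I_2 by apply/val_inj.
have l1 : lift 1 0 = 0 :> 'I_2 by apply/val_inj.
rewrite !mxE /cofactor !det_mx11 !mxE l0 l1; split; [exact: mul1r | exact: mulN1r | exact: mulN1r |].
by rewrite -[(-1) ^+ _]/(((-1) ^+ 1) ^+ 2) sqrr_sign mul1r.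
Qed.

Section QuaternionAlgebra.
Variable R : comPzRingType.

Record quat := Quat { q0 : R; q1 : R; q2 : R; q3 : R }.

Definition qone : quat := Quat 1 0 0 0.

Definition qmul (p q : quat) : quat :=
  Quat (q0 p * q0 q - q1 p * q1 q - q2 p * q2 q - q3 p * q3 q)
       (q0 p * q1 q + q1 p * q0 q + q2 p * q3 q - q3 p * q2 q)
       (q0 p * q2 q + q2 p * q0 q + q3 p * q1 q - q1 p * q3 q)
       (q0 p * q3 q + q3 p * q0 q + q1 p * q2 q - q2 p * q1 q).

Definition qconj (p : quat) : quat := Quat (q0 p) (- q1 p) (- q2 p) (- q3 p).

Definition qdot (p q : quat) : R := q1 p * q1 q + q2 p * q2 q + q3 p * q3 q.

Definition qnorm (p : quat) : R := q0 p ^+ 2 + qdot p p.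

Definition qdet (p q r : quat) : R :=
  (q2 p * q3 q - q3 p * q2 q) * q1 r + (q3 p * q1 q - q1 p * q3 q) * q2 r
  + (q1 p * q2 q - q2 p * q1 q) * q3 r.

Implicit Types p q r : quat.

Lemma qmulA : associative qmul.
Proof. by case=> ? ? ? ? [? ? ? ?] [? ? ? ?]; congr Quat => /=; ring. Qed.

Lemma qmul1q : left_id qone qmul.
Proof. by case=> ? ? ? ?; congr Quat => /=; ring. Qed.

Lemma qmulq1 : right_id qone qmul.
Proof. by case=> ? ? ? ?; congr Quat => /=; ring. Qed.

Lemma qmul_conj p : qmul p (qconj p) = Quat (qnorm p) 0 0 0.
Proof. by case: p => ? ? ? ?; congr Quat; rewrite /qnorm /qdot /=; ring. Qed.

Lemma qnorm_conj p : qnorm (qconj p) = qnorm p.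
Proof. by case: p => ? ? ? ?; rewrite /qnorm /qdot /=; ring. Qed.

Lemma qnorm_mul p q : qnorm (qmul p q) = qnorm p * qnorm q.
Proof. by case: p q => ? ? ? ? [? ? ? ?]; rewrite /qnorm /qdot /=; ring. Qed.

Lemma qmul_eq1 p q : qnorm q = 1 -> qmul p q = qone -> p = qconj q.
Proof.
move=> nq pq1; have qq' : qone = qmul q (qconj q) by rewrite qmul_conj nq.
by rewrite -[p]qmulq1 qq' qmulA pq1 qmul1q.
Qed.

Lemma q0_mul p q : q0 (qmul p q) = q0 p * q0 q - qdot p q.
Proof. by rewrite /qdot /=; ring. Qed.

Lemma q0_mul3 p q r : q0 r = 0 ->
  q0 (qmul (qmul p q) r) = - (q0 p * qdot q r + q0 q * qdot p r + qdet p q r).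
Proof. by case: p q r => ? ? ? ? [? ? ? ?] [? ? ? ?] /= ->; rewrite /qdot /qdet /=; ring. Qed.

Lemma qdotC p q : qdot p q = qdot q p.
Proof. by rewrite /qdot; ring. Qed.

Lemma qdet_sqr p q r :
  qdet p q r ^+ 2 = qdot p p * qdot q q * qdot r r + 2 * qdot p q * qdot q r * qdot r p
    - qdot p p * qdot q r ^+ 2 - qdot q q * qdot r p ^+ 2 - qdot r r * qdot p q ^+ 2.
Proof. by rewrite /qdet /qdot; ring. Qed.

End QuaternionAlgebra.

Section QuaternionOrder.
Variable R : realDomainType.
Implicit Types p q : quat R.

Lemma q0_sqr_le_qnorm p : q0 p ^+ 2 <= qnorm p.
Proof. by rewrite /qnorm /qdot lerDl !addr_ge0 // -expr2 sqr_ge0. Qed.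

Lemma qdot_sqr_le p q : qdot p q ^+ 2 <= qdot p p * qdot q q.
Proof.
rewrite -subr_ge0.
have -> : qdot p p * qdot q q - qdot p q ^+ 2 =
    (q2 p * q3 q - q3 p * q2 q) ^+ 2 + (q3 p * q1 q - q1 p * q3 q) ^+ 2
  + (q1 p * q2 q - q2 p * q1 q) ^+ 2 by rewrite /qdot; ring.
by rewrite !addr_ge0 ?sqr_ge0.
Qed.

End QuaternionOrder.

Section QuaternionMatrices.
Variable R : realType.
Local Open Scope complex_scope.
Implicit Types p q : quat R.

Definition qmat p : 'M[R[i]]_2 :=
  \matrix_(i < 2, j < 2)
    if (i : nat) == 0%N then (if (j : nat) == 0%N then q0 p +i* q1 p else q2 p +i* q3 p)
    else (if (j : nat) == 0%N then (- q2 p) +i* q3 p else q0 p +i* (- q1 p)).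

Lemma qmat_mul p q : qmat p *m qmat q = qmat (qmul p q).
Proof.
by apply: mx2_ext; rewrite !mxE !big_ord_recl big_ord0 !mxE /=; simpc; congr (_ +i* _); ring.
Qed.

Lemma qmat1 : qmat (qone R) = 1%:M.
Proof. by apply: mx2_ext; rewrite !mxE /=; simpc. Qed.

Lemma qmat_inj : injective qmat.
Proof.
move=> p q /matrixP e; have := e 0 0; have := e 0 1; rewrite !mxE /= => -[e2 e3] [e0 e1].
by clear e; case: p q e0 e1 e2 e3 => ? ? ? ? [? ? ? ?] /= -> -> -> ->.
Qed.

Lemma adjmx_qmat p : adjmx (qmat p) = qmat (qconj p).
Proof. by apply: mx2_ext; rewrite /adjmx !mxE /=; simpc. Qed.

Lemma det_qmat p : \det (qmat p) = (qnorm p)%:C.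
Proof. by rewrite det_mx2 !mxE /= /qnorm /qdot; simpc; congr (_ +i* _); ring. Qed.

Lemma mxtrace_qmat p : \tr (qmat p) = (2 * q0 p)%:C.
Proof. by rewrite /mxtrace !big_ord_recl big_ord0 !mxE /=; simpc; congr (_ +i* _); ring. Qed.

Lemma SU2_qmat p : qnorm p = 1 -> SU2 (qmat p).
Proof.
move=> np; split; last by rewrite det_qmat np.
by rewrite adjmx_qmat qmat_mul qmul_conj np qmat1.
Qed.

Lemma SU2_qmatP (M : 'M[R[i]]_2) : SU2 M -> exists2 p, M = qmat p & qnorm p = 1.
Proof.
case=> hU hD.
have adjM : \adj M *m M = 1%:M by rewrite mul_adj_mx hD.
have /matrixP hadj : adjmx M = \adj M by rewrite -[adjmx M]mul1mx -adjM -mulmxA hU mulmx1.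
have := hadj 0 0; have := hadj 1 0; case: (adj_mx2 M) => -> _ -> _.
rewrite /adjmx !mxE => e10 e00.
have [p EM] : exists p, M = qmat p.
  move: e10 e00; case E00: (M 0 0) => [p0 p1]; case E01: (M 0 1) => [p2 p3] e10 e00.
  exists (Quat p0 p1 p2 p3); apply: mx2_ext; rewrite !mxE /= ?E00 ?E01 -?e00 //.
  by rewrite -[M 1 0]opprK -e10; simpc.
by exists p => //; apply: complexI; rewrite -det_qmat -EM hD.
Qed.

End QuaternionMatrices.

Section CubicSurface.
Variable R : rcfType.
Implicit Types (a b x y z : R) (A B C : quat R).

Definition surface_eq a b x y z : Prop :=
  x ^+ 2 + y ^+ 2 + z ^+ 2 + x * y * z = a * b * x - (a ^+ 2 + b ^+ 2 - 4).

(* [A], [B], [C] stand for [rho A], [rho B], [rho C]; then [rho D] is forced to be the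
   inverse of [ABC], whose trace vanishes iff [q0 (ABC) = 0]. *)
Definition quat_realization a b x y z A B C : Prop :=
  [/\ qnorm A = 1, qnorm B = 1, qnorm C = 1, q0 C = 0 & q0 (qmul (qmul A B) C) = 0] /\
  [/\ a = 2 * q0 A, b = 2 * q0 B, x = 2 * q0 (qmul A B), y = 2 * q0 (qmul B C)
    & z = 2 * q0 (qmul C A)].

Lemma realization_surface a b x y z A B C :
  quat_realization a b x y z A B C -> surface_eq a b x y z.
Proof.
case=> -[nA nB nC q0C q0ABC] [-> -> -> -> ->]; rewrite !q0_mul q0C (qdotC C A).
have hAA : qdot A A = 1 - q0 A ^+ 2 by rewrite -nA /qnorm; ring.
have hBB : qdot B B = 1 - q0 B ^+ 2 by rewrite -nB /qnorm; ring.
have hCC : qdot C C = 1 by rewrite -nC /qnorm q0C; ring.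
have triple : qdet A B C = - (q0 A * qdot B C + q0 B * qdot A C).
  by move: q0ABC; rewrite q0_mul3 //; lra.
have := qdet_sqr A B C; rewrite triple hAA hBB hCC (qdotC C A) /surface_eq.
lra.
Qed.

Lemma realization_bounds a b x y z A B C : quat_realization a b x y z A B C ->
  [/\ x ^+ 2 <= 4, y ^+ 2 <= 4 - b ^+ 2 & z ^+ 2 <= 4 - a ^+ 2].
Proof.
case=> -[nA nB nC q0C _] [-> -> -> -> ->].
have nAB : qnorm (qmul A B) = 1 by rewrite qnorm_mul nA nB mulr1.
have h1 := q0_sqr_le_qnorm (qmul A B).
have h2 := qdot_sqr_le B C.
have h3 := qdot_sqr_le C A.
rewrite nAB in h1; rewrite [q0 (qmul B C)]q0_mul [q0 (qmul C A)]q0_mul q0C.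
move: nA nB nC; rewrite /qnorm q0C => nA nB nC.
split; nra.
Qed.

Lemma exists_scaled_circle (r g d s : R) : 0 <= s -> g ^+ 2 + d ^+ 2 = r ^+ 2 * s ->
  exists u v, [/\ r * u = g, r * v = d & u ^+ 2 + v ^+ 2 = s].
Proof.
move=> s0; have [-> | r0] := eqVneq r 0 => gds.
  move: gds; rewrite expr0n mul0r => /eqP; rewrite paddr_eq0 ?sqr_ge0 // !sqrf_eq0.
  case/andP=> /eqP-> /eqP->; exists (Num.sqrt s), 0.
  by rewrite !mul0r expr0n addr0 sqr_sqrtr.
exists (g / r), (d / r); split; [by rewrite mulrC divfK.. |].
by rewrite !expr_div_n -mulrDl gds; field.
Qed.

Lemma surface_realization a b x y z : surface_eq a b x y z ->
  y ^+ 2 <= 4 - b ^+ 2 -> z ^+ 2 <= 4 - a ^+ 2 -> exists A B C, quat_realization a b x y z A B C.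
Proof.
move=> hS hy hz; pose r := Num.sqrt (1 - a ^+ 2 / 4 - z ^+ 2 / 4).
have r2 : r ^+ 2 = 1 - a ^+ 2 / 4 - z ^+ 2 / 4 by rewrite sqr_sqrtr //; lra.
have s0 : 0 <= 1 - b ^+ 2 / 4 - y ^+ 2 / 4 by lra.
have : (a * b / 4 - x / 2 - y * z / 4) ^+ 2 + ((a * y + b * z) / 4) ^+ 2
       = r ^+ 2 * (1 - b ^+ 2 / 4 - y ^+ 2 / 4) by rewrite r2; move: hS; rewrite /surface_eq; lra.
case/(exists_scaled_circle s0) => u [v [ru rv uv]].
exists (Quat (a / 2) r 0 (- z / 2)), (Quat (b / 2) u v (- y / 2)), (Quat 0 0 0 1).
by split; split; rewrite /qnorm /qdot /=; lra.
Qed.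

Definition level_value a b x : R := a * b * x - (a ^+ 2 + b ^+ 2 - 4) - x ^+ 2.

Lemma surface_eqC a b x y z : surface_eq a b x y z -> surface_eq b a x z y.
Proof. by rewrite /surface_eq => hS; lra. Qed.

Lemma level_valueC a b x : level_value a b x = level_value b a x.
Proof. by rewrite /level_value; ring. Qed.

Lemma surface_eq_diag a b x y z : surface_eq a b x y z <->
  (2 + x) * ((y + z) / 2) ^+ 2 + (2 - x) * ((y - z) / 2) ^+ 2 = level_value a b x.
Proof. by rewrite /surface_eq /level_value; split=> h; lra. Qed.

Lemma level_value_ge0 a b x y z : surface_eq a b x y z -> x ^+ 2 <= 4 -> 0 <= level_value a b x.
Proof.
move=> /surface_eq_diag <- x2; have xp : 0 <= 2 + x by nra.
have xm : 0 <= 2 - x by nra.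
by rewrite addr_ge0 // mulr_ge0 // sqr_ge0.
Qed.

Lemma level_value_le a b x : a ^+ 2 <= 4 -> x ^+ 2 <= 4 -> level_value a b x <= 4 - a ^+ 2.
Proof.
move=> a2 x2; have := sqr_ge0 (a * x - 2 * b).
have : 0 <= (4 - a ^+ 2) * x ^+ 2 by rewrite mulr_ge0 ?sqr_ge0 // subr_ge0.
rewrite /level_value; nra.
Qed.

Lemma surface_z_bound a b x y z : surface_eq a b x y z -> x ^+ 2 < 4 -> z ^+ 2 <= 4 - a ^+ 2.
Proof.
move=> hS x2; rewrite -(ler_pM2l (_ : 0 < 4 - x ^+ 2)) ?subr_gt0 //.
have : (4 - x ^+ 2) * z ^+ 2 + (2 * y + x * z) ^+ 2 + (a * x - 2 * b) ^+ 2
       = (4 - x ^+ 2) * (4 - a ^+ 2) by move: hS; rewrite /surface_eq; lra.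
have := sqr_ge0 (2 * y + x * z); have := sqr_ge0 (a * x - 2 * b); lra.
Qed.

Lemma surface_y_bound a b x y z : surface_eq a b x y z -> x ^+ 2 < 4 -> y ^+ 2 <= 4 - b ^+ 2.
Proof. by move/surface_eqC; apply: surface_z_bound. Qed.

Lemma surface_eq_boundary a b x y z : x ^+ 2 = 4 ->
  surface_eq a b x y z <-> a = x / 2 * b /\ z = - (x / 2 * y).
Proof.
move=> x2.
have sq : x ^+ 2 + y ^+ 2 + z ^+ 2 + x * y * z - (a * b * x - (a ^+ 2 + b ^+ 2 - 4))
    = (y + x / 2 * z) ^+ 2 + (a - x / 2 * b) ^+ 2 + (x ^+ 2 - 4) * (1 - z ^+ 2 / 4 - b ^+ 2 / 4).
  by field.
rewrite (_ : x ^+ 2 - 4 = 0) ?mul0r ?addr0 in sq; last by rewrite x2 subrr.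
have xxy (t : R) : x / 2 * (x / 2 * t) = t by rewrite mulrA -expr2 expr_div_n x2; field.
rewrite /surface_eq; split=> [/eqP | [ab zy]].
  rewrite -subr_eq0 sq paddr_eq0 ?sqr_ge0 // !sqrf_eq0 => /andP[/eqP yz /eqP ab].
  split; first by lra.
  by rewrite -{1}(xxy z) (_ : x / 2 * z = - y) ?mulrN //; lra.
by apply/eqP; rewrite -subr_eq0 sq ab zy mulrN xxy !subrr expr0n addr0.
Qed.

Lemma ellipse_param (p q k Y Z : R) : 0 < p -> 0 < q -> 0 <= k ->
  p * Y ^+ 2 + q * Z ^+ 2 = k <->
  exists u v, [/\ u ^+ 2 + v ^+ 2 = 1, Y = u * Num.sqrt (k / p) & Z = v * Num.sqrt (k / q)].
Proof.
move=> p0 q0 k0.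
have sp : Num.sqrt (k / p) ^+ 2 = k / p by rewrite sqr_sqrtr // divr_ge0 // ltW.
have sq : Num.sqrt (k / q) ^+ 2 = k / q by rewrite sqr_sqrtr // divr_ge0 // ltW.
split=> [hk | [u [v [uv -> ->]]]]; last first.
  by rewrite !exprMn sp sq -[RHS]mul1r -uv; field; rewrite ?gt_eqF.
have [k00 | kn0] := eqVneq k 0.
  have pY : 0 <= p * Y ^+ 2 by rewrite mulr_ge0 ?sqr_ge0 ?ltW.
  have qZ : 0 <= q * Z ^+ 2 by rewrite mulr_ge0 ?sqr_ge0 ?ltW.
  move/eqP: hk; rewrite k00 paddr_eq0 //.
  rewrite [p * _ == 0]mulf_eq0 [q * _ == 0]mulf_eq0 (gt_eqF p0) (gt_eqF q0) !sqrf_eq0.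
  case/andP=> /eqP-> /eqP->.
  by exists 1, 0; rewrite expr1n expr0n addr0 !mul0r sqrtr0 !mulr0.
have kp : 0 < k by rewrite lt_neqAle eq_sym kn0.
have spn : Num.sqrt (k / p) != 0 by rewrite gt_eqF // sqrtr_gt0 divr_gt0.
have sqn : Num.sqrt (k / q) != 0 by rewrite gt_eqF // sqrtr_gt0 divr_gt0.
exists (Y / Num.sqrt (k / p)), (Z / Num.sqrt (k / q)); rewrite !divfK //; split=> //.
rewrite !expr_div_n sp sq -hk in kn0 *.
by field; rewrite kn0 !gt_eqF.
Qed.

Lemma segment_param (r Y : R) : 0 <= r -> Y ^+ 2 <= r ^+ 2 <-> exists u v, u ^+ 2 + v ^+ 2 = 1 /\ Y = u * r.
Proof.
move=> r0; split=> [hY | [u [v [uv ->]]]]; last first.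
  by rewrite exprMn ler_piMl ?sqr_ge0 //; have := sqr_ge0 v; lra.
have [r00 | rn0] := eqVneq r 0.
  exists 1, 0; rewrite expr1n expr0n addr0 mul1r r00; split=> //.
  by apply/eqP; rewrite -sqrf_eq0 eq_le sqr_ge0 andbT (le_trans hY) // r00 expr0n.
have rp : 0 < r by rewrite lt_neqAle eq_sym rn0.
have u2 : (Y / r) ^+ 2 <= 1 by rewrite expr_div_n ler_pdivrMr ?exprn_gt0 // mul1r.
exists (Y / r), (Num.sqrt (1 - (Y / r) ^+ 2)); rewrite divfK //.
by rewrite sqr_sqrtr ?subr_ge0 // addrC subrK.
Qed.

End CubicSurface.

Section LevelSets.
Variable R : realType.
Implicit Types a b x y z : R.

Lemma Ekappa_quatP a b x y z :
  Ekappa a b 0 0 (x, y, z) <-> exists A B C, quat_realization a b x y z A B C.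
Proof.
split.
- case=> MA [MB [MC [MD [[sA sB sC sD hP] [tA tB tC tD] /= [tAB tBC tCA]]]]].
  case: (SU2_qmatP sA) hP tA tAB tCA => A -> nA.
  case: (SU2_qmatP sB) tB tBC => B -> nB; case: (SU2_qmatP sC) tC => C -> nC.
  case: (SU2_qmatP sD) tD => D -> nD.
  rewrite !qmat_mul -qmat1 !mxtrace_qmat.
  move=> /complexI tD /complexI tC /complexI tB /complexI tBC /qmat_inj/qmul_eq1-/(_ nD) ABC.
  move=> /complexI tA /complexI tAB /complexI tCA.
  exists A, B, C; split; split=> //; try lra.
  by rewrite ABC; lra.
- case=> A [B [C [[nA nB nC q0C q0ABC] [-> -> -> -> ->]]]].
  have nABC : qnorm (qconj (qmul (qmul A B) C)) = 1 by rewrite qnorm_conj !qnorm_mul nA nB nC !mulr1.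
  exists (qmat A), (qmat B), (qmat C), (qmat (qconj (qmul (qmul A B) C))).
  split; first split; try exact: SU2_qmat.
  + by rewrite !qmat_mul qmul_conj -qmat1 !qnorm_mul nA nB nC !mulr1.
  + split; rewrite mxtrace_qmat //; first by rewrite q0C mulr0.
    by rewrite (q0ABC : q0 (qconj _) = 0) mulr0.
  + by split; rewrite qmat_mul mxtrace_qmat.
Qed.

Lemma EkappaE a b x y z : Ekappa a b 0 0 (x, y, z) <->
  [/\ surface_eq a b x y z, y ^+ 2 <= 4 - b ^+ 2 & z ^+ 2 <= 4 - a ^+ 2].
Proof.
rewrite Ekappa_quatP; split=> [[A [B [C hABC]]] | [hS hy hz]].
  by have [_ ? ?] := realization_bounds hABC; split=> //; apply: realization_surface hABC.
exact: surface_realization.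
Qed.

Lemma Ekappa_x_bound a b x y z : Ekappa a b 0 0 (x, y, z) -> x ^+ 2 <= 4.
Proof. by case/Ekappa_quatP=> A [B [C /realization_bounds[]]]. Qed.

Lemma ellipse_centered_slice (S : R * R * R -> Prop) x (e1 e2 : R * R) :
  (forall p, S p -> p.1.1 = x) ->
  (forall y z, S (x, y, z) <->
     exists u v, u ^+ 2 + v ^+ 2 = 1 /\ (y, z) = (u * e1.1 + v * e2.1, u * e1.2 + v * e2.2)) ->
  ellipse_centered S (x, 0, 0).
Proof.
move=> Sx Syz; exists (0, e1.1, e1.2), (0, e2.1, e2.2) => -[[x' y] z].
split=> [Sp | [u [v [uv [-> -> ->]]]]].
  have ex := Sx _ Sp; rewrite /= in ex; subst x'.
  case/Syz: Sp => u [v [uv [-> ->]]]; exists u, v; split=> //.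
  by congr (_, _, _) => /=; ring.
rewrite /= !mulr0 !addr0 !add0r.
by apply/Syz; exists u, v.
Qed.

Lemma Xlevel_ellipse_interior a b x : x ^+ 2 < 4 -> 0 <= level_value a b x ->
  ellipse_centered (Xlevel a b 0 0 x) (x, 0, 0).
Proof.
move=> x2 K0; have xp : 0 < 2 + x by nra.
have xm : 0 < 2 - x by nra.
pose s := Num.sqrt (level_value a b x / (2 + x)).
pose t := Num.sqrt (level_value a b x / (2 - x)).
apply: (@ellipse_centered_slice _ _ (s, s) (t, - t)) => [p [] // | y z].
have -> : Xlevel a b 0 0 x (x, y, z) <-> surface_eq a b x y z.
  rewrite /Xlevel EkappaE /=; split=> [[[]] // | hS].
  by split=> //; split=> //; [apply: surface_y_bound hS x2 | apply: surface_z_bound hS x2].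
rewrite surface_eq_diag ellipse_param // -/s -/t.
split=> [[u [v [uv hY hZ]]] | [u [v [uv [-> ->]]]]]; exists u, v.
  by split=> //; congr (_, _) => /=; lra.
by split=> //=; field.
Qed.

Lemma Xlevel_ellipse_boundary a b x : x ^+ 2 = 4 -> b ^+ 2 <= 4 -> a = x / 2 * b ->
  ellipse_centered (Xlevel a b 0 0 x) (x, 0, 0).
Proof.
move=> x2 b2 ab; pose r := Num.sqrt (4 - b ^+ 2).
have r2 : r ^+ 2 = 4 - b ^+ 2 by rewrite sqr_sqrtr // subr_ge0.
have a2 : a ^+ 2 = b ^+ 2 by rewrite ab exprMn expr_div_n x2; field.
have zy (y : R) : (- (x / 2 * y)) ^+ 2 = y ^+ 2 by rewrite sqrrN exprMn expr_div_n x2; field.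
apply: (@ellipse_centered_slice _ _ (r, - (x / 2 * r)) (0, 0)) => [p [] // | y z].
have -> : Xlevel a b 0 0 x (x, y, z) <-> z = - (x / 2 * y) /\ y ^+ 2 <= r ^+ 2.
  rewrite /Xlevel EkappaE r2; split=> [[[/(surface_eq_boundary _ _ _ _ x2)[_ ->] ? _] _] // | [zxy hy]].
  split=> //; split=> //; first exact/surface_eq_boundary.
  by rewrite zxy zy a2.
rewrite (segment_param _ (sqrtr_ge0 _)) -/r.
split=> [[-> [u [v [uv ->]]]] | [u [v [uv [-> ->]]]]].
  by exists u, v; split=> //; congr (_, _) => /=; ring.
by split; [ring | exists u, v; split=> //; ring].
Qed.

Lemma Ekappa_level_y0 a b x : a ^+ 2 <= 4 -> b ^+ 2 <= 4 -> x ^+ 2 <= 4 -> 0 <= level_value a b x ->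
  Ekappa a b 0 0 (x, 0, Num.sqrt (level_value a b x)).
Proof.
move=> a2 b2 x2 K0; apply/EkappaE; rewrite sqr_sqrtr // expr0n /= subr_ge0.
split=> //; last exact: level_value_le.
by rewrite /surface_eq; move: (sqr_sqrtr K0); rewrite /level_value => ?; lra.
Qed.

Lemma EkappaC a b x y z : Ekappa a b 0 0 (x, y, z) -> Ekappa b a 0 0 (x, z, y).
Proof. by case/EkappaE=> /surface_eqC hS hy hz; apply/EkappaE. Qed.

End LevelSets.

Unset Implicit Arguments.

Theorem lemma6p3 (R : realType) (a b : R) (ha : -2 <= a <= 2) (hb : -2 <= b <= 2) :
  (forall x : R, (exists p, Xlevel a b 0 0 x p) ->
     ellipse_centered (Xlevel a b 0 0 x) (x, 0, 0))
  /\
  (forall x : R, (exists p, Xlevel a b 0 0 x p) ->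
     (exists p, Xlevel a b 0 0 x p /\ Ylevel a b 0 0 0 p) /\
     (exists p, Xlevel a b 0 0 x p /\ Zlevel a b 0 0 0 p)).
Proof.
have a2 : a ^+ 2 <= 4 by nra.
have b2 : b ^+ 2 <= 4 by nra.
have level_facts x : (exists p, Xlevel a b 0 0 x p) ->
    [/\ x ^+ 2 <= 4, 0 <= level_value a b x & x ^+ 2 = 4 -> a = x / 2 * b].
  case=> -[[x' y] z] [hE /= ex]; subst x'; have x2 := Ekappa_x_bound hE.
  case/EkappaE: hE => hS _ _; split=> [//||x4]; first exact: level_value_ge0 hS x2.
  by case/(surface_eq_boundary _ _ _ _ x4): hS.
split=> x /level_facts[x2 K0 ab].
  have [x_lt | x_ge] := ltP (x ^+ 2) 4; first exact: Xlevel_ellipse_interior.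
  have x_eq : x ^+ 2 = 4 by apply/eqP; rewrite eq_le x2 x_ge.
  exact: Xlevel_ellipse_boundary x_eq b2 (ab x_eq).
have hY := Ekappa_level_y0 a2 b2 x2 K0.
have hZ : Ekappa a b 0 0 (x, Num.sqrt (level_value a b x), 0).
  by apply: EkappaC; rewrite level_valueC; apply: Ekappa_level_y0; rewrite // -level_valueC.
by split; [exists (x, 0, Num.sqrt (level_value a b x)) | exists (x, Num.sqrt (level_value a b x), 0)].
Qed.
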